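(* Let $A$ and $B$ be commutative rings with identity and let $\phi:A\to B$ be a surjective ring homomorphism with $\ker(\phi)=\langle\pi\rangle$ for some $\pi\in A$. If $B$ is a principal ideal ring, then for every ideal $I$ of $A$ there exists $a\in I$ such that $$I=\langle a\rangle+\pi(I:\pi).$$
   Context: For ideals $I,J$ of a commutative ring $R$, $(I:J)=\{x\in R: xJ\subseteq I\}$, and $(I:a)=(I:\langle a\rangle)$. *)

From mathcomp Require Import all_boot all_algebra.
Set Implicit Arguments. Unset Strict Implicit. Unset Printing Implicit Defensive.
Import GRing.Theory.
Local Open Scope ring_scope.

Definition is_ideal (R : comPzRingType) (I : R -> Prop) : Prop :=
  [/\ I 0, (forall x y, I x -> I y -> I (x + y)) & (forall r x, I x -> I (r * x))].

Definition principal (R : comPzRingType) (a : R) : R -> Prop :=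
  fun x => exists r : R, x = r * a.

Definition same_set (R : Type) (I J : R -> Prop) : Prop := forall x, I x <-> J x.

Definition principal_ideal_ring (R : comPzRingType) : Prop :=
  forall J : R -> Prop, is_ideal J -> exists b : R, same_set J (principal b).

Definition colon (R : comPzRingType) (I : R -> Prop) (a : R) : R -> Prop :=
  fun x => I (x * a).

Definition ideal_sum (R : comPzRingType) (J K : R -> Prop) : R -> Prop :=
  fun x => exists u v, [/\ J u, K v & x = u + v].

Definition scale_set (R : comPzRingType) (c : R) (J : R -> Prop) : R -> Prop :=
  fun x => exists y, J y /\ x = c * y.

From mathcomp Require Import all_boot all_algebra.
Set Implicit Arguments. Unset Strict Implicit. Unset Printing Implicit Defensive.
Import GRing.Theory.
Local Open Scope ring_scope.

(* The image [phi(I)] is an ideal of the principal ideal ring [B], say [<phi a>]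
   with [a] in [I].  Every [x] in [I] then satisfies [phi x = phi (s a)] for some
   [s], so [x - s a] lies in [ker phi = <pi>]; writing [x - s a = pi t], the
   element [pi t] lies in [I], i.e. [t] lies in [(I : pi)]. *)

Definition ideal_image (A B : comPzRingType) (phi : A -> B) (I : A -> Prop) : B -> Prop :=
  fun y => exists x, I x /\ phi x = y.

Section Ideals.

Variables (R : comPzRingType) (I : R -> Prop).
Hypothesis idI : is_ideal I.

Lemma ideal_oppr (x : R) : I x -> I (- x).
Proof. by case: idI => _ _ IM Ix; rewrite -mulN1r; apply: IM. Qed.

Lemma ideal_sum_principal_scale_colon_sub (a pi x : R) : I a ->
  ideal_sum (principal a) (scale_set pi (colon I pi)) x -> I x.
Proof.
case: idI => _ ID IM Ia [_ [_ [[r ->] [y [Iypi ->]] ->]]].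
by apply: ID; [apply: IM | rewrite mulrC].
Qed.

Lemma ideal_sum_principal_scale_colon (a pi s x : R) : I a -> I x ->
  principal pi (x - s * a) ->
  ideal_sum (principal a) (scale_set pi (colon I pi)) x.
Proof.
case: idI => _ ID IM Ia Ix [t Et].
exists (s * a), (pi * t); split; first by exists s.
- exists t; split => //; rewrite /colon -Et.
  by apply: ID => //; apply/ideal_oppr/IM.
- by rewrite [pi * t]mulrC -Et addrC subrK.
Qed.

End Ideals.

Section SurjectiveImage.

Variables (A B : comPzRingType) (phi : {rmorphism A -> B}).
Hypothesis phi_surj : forall b : B, exists a : A, phi a = b.

Lemma is_ideal_image (I : A -> Prop) : is_ideal I -> is_ideal (ideal_image phi I).
Proof.
case=> I0 ID IM; split.
- by exists 0; rewrite rmorph0.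
- move=> _ _ [x [Ix <-]] [x' [Ix' <-]].
  by exists (x + x'); rewrite rmorphD; split; first exact: ID.
- move=> r _ [x [Ix <-]]; have [s <-] := phi_surj r.
  by exists (s * x); rewrite rmorphM; split; first exact: IM.
Qed.

Lemma principal_image_lift (I : A -> Prop) (b : B) :
  same_set (ideal_image phi I) (principal b) ->
  exists a, I a /\ forall x, I x -> exists s, phi (x - s * a) = 0.
Proof.
move=> Ib; have [a [Ia pa]] : ideal_image phi I b by apply/Ib; exists 1; rewrite mul1r.
exists a; split=> // x Ix.
have [r Er] : principal b (phi x) by apply/Ib; exists x.
have [s Es] := phi_surj r.
by exists s; rewrite rmorphB rmorphM Es pa Er subrr.
Qed.

End SurjectiveImage.

Theorem corollary2p2 (A B : comPzRingType) (phi : {rmorphism A -> B}) (pi : A)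
  (phi_surj : forall b : B, exists a : A, phi a = b)
  (ker_pi : same_set (fun x : A => phi x = 0) (principal pi))
  (B_pir : principal_ideal_ring B) :
  forall I : A -> Prop, is_ideal I ->
    exists a : A, I a /\
      same_set I (ideal_sum (principal a) (scale_set pi (colon I pi))).
Proof.
move=> I idI.
have [b Ib] := B_pir _ (is_ideal_image phi_surj idI).
have [a [Ia lift]] := principal_image_lift phi_surj Ib.
exists a; split=> // x; split; last exact: ideal_sum_principal_scale_colon_sub.
move=> Ix; have [s /ker_pi ker_x] := lift x Ix.
exact: ideal_sum_principal_scale_colon Ia Ix ker_x.
Qed.
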